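(* Let $n$ and $m$ be integers with $n\geq 5$ and $m\geq 5$. Let $G\in T_{n,m}$, and let $v$ be a vertex of $G$ of degree $1$ whose unique neighbor is the terminal $s$. If $G-sv$ is complete, then there exists $H\in T_{n,m}$ that is $3$-stronger than $G$.
   Context: All graphs are finite, simple and undirected. A two-terminal graph is a graph $G$ together with two distinguished vertices $s,t$ (the terminals). $T_{n,m}$ denotes the set of all pairwise nonisomorphic (with isomorphisms preserving the set of terminals) two-terminal graphs with $n$ vertices and $m$ edges. A two-terminal graph is called complete if the connected component containing both terminals is a complete graph. $G-sv$ is the two-terminal graph obtained from $G$ by deleting the edge $sv$. For a positive integer $d$, a $d$-pathset of a two-terminal graph $G$ is a spanning subgraph of $G$ containing a path of length (number of edges) at most $d$ joining $s$ and $t$; $N_i^d(G)$ is the number of $d$-pathsets of $G$ with exactly $i$ edges. For $G,H\in T_{n,m}$, $H$ is $d$-stronger than $G$ if $N_i^d(H)\geq N_i^d(G)$ for every $i\in\{1,\ldots,m\}$ and $N_j^d(H)>N_j^d(G)$ for some $j\in\{1,\ldots,m\}$. *)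

From mathcomp Require Import all_boot.
Set Implicit Arguments. Unset Strict Implicit. Unset Printing Implicit Defensive.

(* A two-terminal graph on the vertex set 'I_n is given by an edge set
   E : {set {set 'I_n}} (each edge a 2-element set) and terminals s, t. *)

Definition adj n (E : {set {set 'I_n}}) : rel 'I_n :=
  fun x y => [set x; y] \in E.

Definition is_tgraph n m (E : {set {set 'I_n}}) (s t : 'I_n) : bool :=
  [&& [forall e in E, #|e| == 2], s != t & #|E| == m].

Definition has_dpath n (d : nat) (F : {set {set 'I_n}}) (s t : 'I_n) : bool :=
  [exists k : 'I_d.+1, [exists p : k.-tuple 'I_n,
     [&& path (adj F) s p, last s p == t & uniq (s :: p)]]].

Definition Npath n (d : nat) (E : {set {set 'I_n}}) (s t : 'I_n) (i : nat) : nat :=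
  #|[set F in powerset E | (#|F| == i) && has_dpath d F s t]|.

Definition stronger n m (d : nat) (EH : {set {set 'I_n}}) (sH tH : 'I_n)
  (EG : {set {set 'I_n}}) (sG tG : 'I_n) : Prop :=
  (forall i, 1 <= i <= m -> Npath d EG sG tG i <= Npath d EH sH tH i) /\
  (exists j, 1 <= j <= m /\ Npath d EG sG tG j < Npath d EH sH tH j).

Definition complete_tgraph n (E : {set {set 'I_n}}) (s t : 'I_n) : Prop :=
  connect (adj E) s t /\
  (forall x y, connect (adj E) s x -> connect (adj E) s y -> x != y ->
     [set x; y] \in E).

Definition deg n (E : {set {set 'I_n}}) (v : 'I_n) : nat :=
  #|[set u | [set v; u] \in E]|.

(* Replace an edge g of G avoiding both terminals by the edge vt,
   keeping the other edges C.  Splitting the (i+1)-edge pathsets of C + g according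
   to whether they contain g gives
     N_{i+1}(C + g) = N_{i+1}(C) + N_i(C) + #{i-edge F in C : F is not a pathset, F + g is},
   so it suffices to inject the g-critical sets into the vt-critical ones.  For i = 1
   there are no g-critical sets, while {sv} is vt-critical: this gives the strict
   inequality for 2-edge pathsets.
   Let K be the complete component of G - sv containing s and t.  If |K| <= 3, some
   edge of G - sv lies outside K; such an edge is never critical.  Otherwise take
   g = xy with x, y in K \ {s, t}: a g-critical F contains sx and yt, or sy and xt,
   and exchanging that edge at s for sv is an injection into the vt-critical sets,
   because v is a leaf and sv never lies on a short s-t path of G. *)

From mathcomp Require Import all_boot all_fingroup.
Set Implicit Arguments. Unset Strict Implicit. Unset Printing Implicit Defensive.

Section Pathsets.
Variables (T : finType) (P : pred {set T}).
Hypothesis P_mono : forall A B : {set T}, A \subset B -> P A -> P B.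
Implicit Types (C F : {set T}) (g : T).

Definition pathsets C i := [set F in powerset C | (#|F| == i) && P F].

Definition critical C g i :=
  [set F in powerset C | [&& #|F| == i, ~~ P F & P (g |: F)]].

Lemma card_pathsets_setU1 C g i : g \notin C ->
  #|pathsets (g |: C) i.+1| = #|pathsets C i.+1| + #|pathsets C i| + #|critical C g i|.
Proof.
move=> gC; set X := [set F in powerset C | (#|F| == i) && P (g |: F)].
have without_g : pathsets (g |: C) i.+1 :\: [set F : {set T} | g \in F] = pathsets C i.+1.
  by apply/setP=> F; rewrite !inE -[in RHS](setU1K gC) subsetD1 [_ && (g \notin F)]andbC -andbA.
have with_g : pathsets (g |: C) i.+1 :&: [set F : {set T} | g \in F] = (fun F => g |: F) @: X.
  apply/setP=> F; apply/idP/imsetP=> [|[F' F'X ->]].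
  - rewrite !inE => /andP[/and3P[sFC cF PF] gF].
    exists (F :\ g); last by rewrite setD1K.
    rewrite (cardsD1 g) gF eqSS in cF.
    by rewrite !inE setD1K // PF cF -(setU1K gC) setSD.
  - move: F'X; rewrite !inE => /and3P[sF'C /eqP cF' PF'].
    have gF' : g \notin F' by apply: contra gC; apply/subsetP.
    by rewrite eqxx setUS // PF' cardsU1 gF' cF' add1n eqxx.
have injX : {in X &, injective (fun F => g |: F)}.
  move=> F1 F2; rewrite !inE => /andP[sF1 _] /andP[sF2 _] /(congr1 (fun F => F :\ g)).
  by rewrite !setU1K //; apply: contra gC; apply/subsetP.
have splitX : #|X| = #|pathsets C i| + #|critical C g i|.
  rewrite -(cardsID [set F : {set T} | P F] X).
  congr (_ + _); apply: eq_card => F; rewrite !inE.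
    case: (boolP (P F)) => PF; last by rewrite !andbF.
    by rewrite (P_mono (subsetU1 g F) PF) !andbT.
  by case: (P F); rewrite /= ?andbF.
rewrite -(cardsID [set F : {set T} | g \in F]) with_g without_g card_in_imset //.
by rewrite splitX addnC addnA.
Qed.
End Pathsets.

Section ShortWalks.
Variable n : nat.
Implicit Types (F : {set {set 'I_n}}) (e : {set 'I_n}) (a b c d s t : 'I_n).

Lemma set2_eq a b c d : [set a; b] = [set c; d] -> (a = c /\ b = d) \/ (a = d /\ b = c).
Proof.
move/setP=> eq_ab_cd.
have := eq_ab_cd c; have := eq_ab_cd d; have := eq_ab_cd a; have := eq_ab_cd b.
rewrite !inE !eqxx ?orbT /= => /esym/orP[]/eqP-> /esym/orP[]/eqP->; auto.
- by case/orP=> /eqP->; auto.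
- by move=> _ /orP[]/eqP->; auto.
Qed.

Lemma set2_neq a b e : a \notin e -> e != [set a; b].
Proof. by apply: contraNneq => ->; rewrite set21. Qed.

Lemma set2_inj a : injective (fun b => [set a; b]).
Proof. by move=> b c /set2_eq[[_ ->]|[-> ->]]. Qed.

Lemma adj_sym F : symmetric (adj F).
Proof. by move=> a b; rewrite /adj setUC. Qed.

Definition loopless F := forall a, [set a; a] \notin F.

Definition walk3 F s t : bool :=
  [|| [set s; t] \in F,
      [exists a, ([set s; a] \in F) && ([set a; t] \in F)] |
      [exists a, exists b, [&& [set s; a] \in F, [set a; b] \in F & [set b; t] \in F]]].

Lemma walk3_1 F s t : [set s; t] \in F -> walk3 F s t.
Proof. by rewrite /walk3 => ->. Qed.

Lemma walk3_2 F s a t : [set s; a] \in F -> [set a; t] \in F -> walk3 F s t.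
Proof. by move=> sa at_; apply/or3P/Or32/existsP; exists a; rewrite sa at_. Qed.

Lemma walk3_3 F s a b t :
  [set s; a] \in F -> [set a; b] \in F -> [set b; t] \in F -> walk3 F s t.
Proof.
by move=> sa ab bt; apply/or3P/Or33/existsP; exists a; apply/existsP; exists b; rewrite sa ab bt.
Qed.

Lemma has_dpath_subset (k : nat) F1 F2 s t :
  F1 \subset F2 -> has_dpath k F1 s t -> has_dpath k F2 s t.
Proof.
move/subsetP=> sF12 /existsP[l /existsP[p /and3P[p_path p_last p_uniq]]].
apply/existsP; exists l; apply/existsP; exists p; rewrite p_last p_uniq !andbT.
by apply: sub_path p_path => x y; apply: sF12.
Qed.

Lemma has_dpath3E F s t : s != t -> loopless F -> has_dpath 3 F s t = walk3 F s t.
Proof.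
move=> neq_st F_loopless; apply/idP/idP.
  case/existsP=> -[k /= lt_k4] /existsP[[p /= /eqP size_p]].
  rewrite -size_p in lt_k4; case: p {size_p} lt_k4 => [|a [|b [|c [|? ?]]]] //= _.
  - by rewrite (negbTE neq_st).
  - by rewrite /adj andbT => /and3P[st /eqP <- _]; apply: walk3_1.
  - by rewrite /adj andbT => /and3P[/andP[sa ab] /eqP <- _]; apply: walk3_2 sa ab.
  - by rewrite /adj andbT => /and3P[/and3P[sa ab bc] /eqP <- _]; apply: walk3_3 sa ab bc.
have neq_edge a b : [set a; b] \in F -> a != b.
  by apply: contraTneq => <-; apply: F_loopless.
have path1 : [set s; t] \in F -> has_dpath 3 F s t.
  move=> st; apply/existsP; exists (@Ordinal 4 1 isT); apply/existsP; exists [tuple t].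
  by rewrite /= /adj st eqxx inE neq_st.
case/or3P=> [|/existsP[a /andP[sa at_]]|/existsP[a /existsP[b /and3P[sa ab bt]]]].
- exact: path1.
- apply/existsP; exists (@Ordinal 4 2 isT); apply/existsP; exists [tuple a; t].
  by rewrite /= /adj sa at_ eqxx !inE negb_or neq_st (neq_edge _ _ sa) (neq_edge _ _ at_).
- have [st|nst] := boolP ([set s; t] \in F); first exact: path1.
  have neq_at : a != t by apply: contraNneq nst => <-.
  have neq_sb : s != b by apply: contraNneq nst => ->.
  apply/existsP; exists (@Ordinal 4 3 isT); apply/existsP; exists [tuple a; b; t].
  rewrite /= /adj sa ab bt eqxx !inE !negb_or neq_st neq_at neq_sb.
  by rewrite (neq_edge _ _ sa) (neq_edge _ _ ab) (neq_edge _ _ bt).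
Qed.

Lemma walk3_setU1 F e s t : s \notin e -> t \notin e -> walk3 (e |: F) s t ->
  walk3 F s t \/ exists a b, [/\ e = [set a; b], [set s; a] \in F & [set b; t] \in F].
Proof.
move=> se te; have s_edge a : ([set s; a] \in e |: F) = ([set s; a] \in F).
  by rewrite in_setU1 eq_sym (negbTE (set2_neq a se)).
have edge_t a : ([set a; t] \in e |: F) = ([set a; t] \in F).
  by rewrite in_setU1 eq_sym setUC (negbTE (set2_neq a te)).
case/or3P=> [|/existsP[a]|/existsP[a /existsP[b]]]; rewrite ?s_edge ?edge_t.
- by move=> st; left; apply: walk3_1.
- by case/andP=> sa at_; left; apply: walk3_2 sa at_.
case/and3P=> sa /setU1P[e_ab|ab] bt; last by left; apply: walk3_3 sa ab bt.
by right; exists a, b.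
Qed.

End ShortWalks.

Lemma tperm_imset_sub (T : finType) (A B : {set T}) a z :
  a \in B -> z \in B -> A \subset B -> tperm a z @: A \subset B.
Proof.
move=> aB zB /subsetP sAB; apply/subsetP=> _ /imsetP[f fA ->].
by case: tpermP => [_|_|_ _] //; apply: sAB.
Qed.

Lemma tperm_imset_subU1 (T : finType) (A : {set T}) a z :
  z \in A -> tperm a z @: A \subset a |: A.
Proof.
move=> zA; apply/subsetP=> _ /imsetP[f fA ->].
by case: tpermP => [_|_|_ _]; rewrite !inE ?eqxx ?zA ?fA ?orbT.
Qed.

Section PendantVertex.
Variables (n m : nat) (E : {set {set 'I_n}}) (s t v : 'I_n).
Hypothesis m_gt4 : 4 < m.
Hypothesis E_tgraph : is_tgraph m E s t.
Hypothesis deg_v : deg E v = 1.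
Hypothesis sv_in_E : [set s; v] \in E.
Hypothesis rest_complete : complete_tgraph (E :\ [set s; v]) s t.

Local Notation sv := [set s; v].
Local Notation vt := [set v; t].
Local Notation E' := (E :\ sv).
Implicit Types (F : {set {set 'I_n}}) (e g : {set 'I_n}) (a b x y : 'I_n).

Definition short_path F := has_dpath 3 F s t.

Definition comp := [set x | connect (adj E') s x].

Lemma edge_card2 e : e \in E -> #|e| = 2.
Proof. by case/and3P: E_tgraph => /forall_inP card2 _ _ /card2/eqP. Qed.

Lemma neq_st : s != t.
Proof. by case/and3P: E_tgraph. Qed.

Lemma card_E : #|E| = m.
Proof. by case/and3P: E_tgraph => _ _ /eqP. Qed.

Lemma E_loopless : loopless E.
Proof. by move=> a; apply/negP=> /edge_card2; rewrite setUid cards1. Qed.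

Lemma v_nbr a : [set v; a] \in E -> a = s.
Proof.
move: deg_v => /eqP/cards1P[b nbrs] va.
have : s \in [set a | [set v; a] \in E] by rewrite inE setUC.
have : a \in [set a | [set v; a] \in E] by rewrite inE.
by rewrite nbrs !inE => /eqP -> /eqP ->.
Qed.

Lemma neq_sv : s != v.
Proof. by apply: contraTneq sv_in_E => ->; apply: E_loopless. Qed.

Lemma s_comp : s \in comp.
Proof. by rewrite inE connect0. Qed.

Lemma t_comp : t \in comp.
Proof. by case: rest_complete; rewrite inE. Qed.

Lemma comp_closed a b : [set a; b] \in E' -> a \in comp -> b \in comp.
Proof. by move=> ab; rewrite !inE => sa; apply: connect_trans sa _; apply: connect1. Qed.

Lemma comp_complete a b : a \in comp -> b \in comp -> a != b -> [set a; b] \in E.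
Proof.
rewrite !inE => ac bc ab; case: rest_complete => _ /(_ a b ac bc ab).
by rewrite in_setD1 => /andP[].
Qed.

Lemma v_notin_comp : v \notin comp.
Proof.
rewrite inE (sym_connect_sym (@adj_sym _ _)).
apply/negP=> /connectP[[|a p] /=]; first by move=> _ eq_sv; case/eqP: neq_sv.
rewrite /adj in_setD1 => /andP[/andP[nsv /v_nbr eq_a] _] _.
by rewrite eq_a setUC eqxx in nsv.
Qed.

Lemma neq_vt : v != t.
Proof. by apply: contraNneq v_notin_comp => ->; apply: t_comp. Qed.

Lemma vt_notin_E : vt \notin E.
Proof. by apply/negP=> /v_nbr eq_ts; move: neq_st; rewrite eq_ts eqxx. Qed.

Lemma subset_vtE F : F \subset E -> F \subset vt |: E.
Proof. by move=> sFE; apply: subset_trans sFE (subsetU1 _ _). Qed.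

Lemma short_path_subset F1 F2 : F1 \subset F2 -> short_path F1 -> short_path F2.
Proof. exact: has_dpath_subset. Qed.

Lemma short_pathE F : F \subset vt |: E -> short_path F = walk3 F s t.
Proof.
move/subsetP=> sFE; apply: has_dpath3E neq_st _ => a; apply/negP=> /sFE.
rewrite in_setU1 (negbTE (E_loopless a)) orbF => /eqP/set2_eq[[va ta]|[va ta]];
by move: neq_vt; rewrite -va -ta eqxx.
Qed.

Lemma walk3_pendant F : F \subset E -> walk3 (sv |: F) s t -> walk3 F s t.
Proof.
move/subsetP=> sFE.
have t_sv : t \notin sv by rewrite !inE negb_or ![t == _]eq_sym neq_st neq_vt.
have edge_t a : ([set a; t] \in sv |: F) = ([set a; t] \in F).
  by rewrite in_setU1 orb_idl // => /eqP eq_at; move: t_sv; rewrite -eq_at set22.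
have vt_F : vt \notin F by apply: contraNN vt_notin_E => /sFE.
have s_edge a : [set s; a] \in sv |: F -> a = v \/ [set s; a] \in F.
  by case/setU1P=> [/set2_inj|]; auto.
case/or3P=> [|/existsP[a /andP[sa]]|/existsP[a /existsP[b /and3P[sa ab]]]];
  rewrite ?edge_t.
- exact: walk3_1.
- case: (s_edge _ sa) => [-> vt_in|sa' at_]; last exact: walk3_2 sa' at_.
  by rewrite vt_in in vt_F.
case: (s_edge _ sa) => [eq_a|sa'].
  have ab_E : [set a; b] \in E by case/setU1P: ab => [->|/sFE].
  by rewrite eq_a in ab_E; rewrite (v_nbr ab_E); apply: walk3_1.
case/setU1P: ab => [/set2_eq[[_ ->]|[_ ->]] bt|ab bt]; last exact: walk3_3 sa' ab bt.
  by rewrite bt in vt_F.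
exact: walk3_1.
Qed.

Lemma walk3_set0 a b : ~~ walk3 (set0 : {set {set 'I_n}}) a b.
Proof. by apply/or3P=> -[|/existsP[c]|/existsP[c /existsP[d]]]; rewrite !in_set0. Qed.

Lemma critical_bridge g F j : g \in E -> s \notin g -> t \notin g ->
    F \in critical short_path (E :\ g) g j ->
  [/\ F \subset E :\ g, #|F| = j, ~~ walk3 F s t &
      exists a b, [/\ g = [set a; b], [set s; a] \in F & [set b; t] \in F]].
Proof.
move=> gE sg tg; rewrite inE powersetE => /and4P[sFC /eqP cardF nP P].
have [sFE _] := subsetD1P sFC.
have sgFE : g |: F \subset E by rewrite subUset sub1set gE.
rewrite !short_pathE ?subset_vtE // in nP P.
by case: (walk3_setU1 sg tg P) => [W|]; [rewrite W in nP | split].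
Qed.

Lemma critical1_eq0 g : g \in E -> s \notin g -> t \notin g ->
  critical short_path (E :\ g) g 1 = set0.
Proof.
move=> gE sg tg; apply/setP=> F; rewrite in_set0.
apply/negP=> /(critical_bridge gE sg tg)[_ /eqP/cards1P[f ->] _ [a [b [eq_g]]]].
rewrite !in_set1 => /eqP<- /eqP/set2_eq[[eq_bs _]|[_ eq_ts]].
  by move: sg; rewrite eq_g eq_bs set22.
by case/eqP: neq_st.
Qed.

Lemma pendant_critical (C : {set {set 'I_n}}) :
  sv \in C -> [set sv] \in critical short_path C vt 1.
Proof.
move=> sv_in; rewrite inE powersetE sub1set sv_in cards1 /=.
rewrite !short_pathE ?subUset ?sub1set ?inE ?eqxx ?sv_in_E ?orbT //.
have no_walk : ~~ walk3 (sv |: set0) s t.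
  by apply: contraNN (walk3_set0 s t); apply: walk3_pendant; apply: sub0set.
rewrite setU0 in no_walk; rewrite no_walk.
exact: walk3_2 (setU1r _ (set11 _)) (setU11 _ _).
Qed.

Lemma replace_edge_stronger g : g \in E -> s \notin g -> t \notin g ->
    (forall j, #|critical short_path (E :\ g) g j| <= #|critical short_path (E :\ g) vt j|) ->
  is_tgraph m (vt |: E :\ g) s t /\ stronger m 3 (vt |: E :\ g) s t E s t.
Proof.
move=> gE sg tg le_critical.
have g_notin : g \notin E :\ g by rewrite setD11.
have vt_notin : vt \notin E :\ g by rewrite in_setD1 (negbTE vt_notin_E) andbF.
have sv_in : sv \in E :\ g by rewrite in_setD1 sv_in_E eq_sym (set2_neq _ sg).
have Npath_card X i : Npath 3 X s t i = #|pathsets short_path X i| by [].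
have Npath_split h i : h \notin E :\ g -> Npath 3 (h |: E :\ g) s t i.+1 =
    #|pathsets short_path (E :\ g) i.+1| + #|pathsets short_path (E :\ g) i| +
    #|critical short_path (E :\ g) h i|.
  by move=> hC; rewrite Npath_card card_pathsets_setU1 //; apply: short_path_subset.
have Npath_E i : Npath 3 E s t i.+1 = #|pathsets short_path (E :\ g) i.+1| +
    #|pathsets short_path (E :\ g) i| + #|critical short_path (E :\ g) g i|.
  by rewrite -{1}(setD1K gE) Npath_split.
split; last split.
- apply/and3P; split; last by rewrite cardsU1 vt_notin -card_E (cardsD1 g E) gE.
    apply/forall_inP=> e /setU1P[->|/setD1P[_ /edge_card2 ->]] //.
    by rewrite cards2 neq_vt.
  exact: neq_st.
- by move=> [|j] // _; rewrite Npath_E Npath_split // leq_add2l.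
exists 2; split; first by rewrite /= (@leq_trans 5).
rewrite Npath_E Npath_split // ltn_add2l critical1_eq0 // cards0 card_gt0.
by apply/set0Pn; exists [set sv]; apply: pendant_critical.
Qed.

Section OuterEdge.
Variable e : {set 'I_n}.
Hypotheses (e_in : e \in E') (e_outside : ~~ (e \subset comp)).

Lemma outer_notin_comp a : a \in e -> a \notin comp.
Proof.
have [_ eE] := setD1P e_in.
have /eqP/cards2P[b [c [_ eq_e]]] := edge_card2 eE.
have comp_bc : (b \in comp) = (c \in comp).
  by apply/idP/idP; apply: comp_closed; rewrite -?eq_e // setUC -eq_e.
move=> ae; apply: contra e_outside => ac.
rewrite eq_e subUset !sub1set comp_bc andbb; move: ae ac; rewrite eq_e.
by case/set2P=> -> //; rewrite comp_bc.
Qed.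

Lemma outer_terminals : s \notin e /\ t \notin e.
Proof. by split; [apply: contraL s_comp | apply: contraL t_comp]; apply: outer_notin_comp. Qed.

Lemma outer_critical_eq0 j : critical short_path (E :\ e) e j = set0.
Proof.
have [_ eE] := setD1P e_in.
have [s_out t_out] := outer_terminals.
apply/setP=> F; rewrite in_set0; apply/negP.
case/(critical_bridge eE s_out t_out)=> /subsetP sFC _ _ [a [b [eq_e sa _]]].
have sa_E : [set s; a] \in E by have /setD1P[] := sFC _ sa.
have ne_av : a != v.
  apply: contraNneq s_out => eq_av; have := eE.
  by rewrite eq_e eq_av => /v_nbr ->; apply: set22.
have /negP[] : a \notin comp by apply: outer_notin_comp; rewrite eq_e set21.
apply: comp_closed s_comp; rewrite in_setD1 sa_E andbT.
by apply: contra ne_av => /eqP/set2_inj ->.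
Qed.

Lemma outer_edge_stronger :
  is_tgraph m (vt |: E :\ e) s t /\ stronger m 3 (vt |: E :\ e) s t E s t.
Proof.
have [[_ eE] [s_out t_out]] := (setD1P e_in, outer_terminals).
by apply: replace_edge_stronger => // j; rewrite outer_critical_eq0 cards0.
Qed.

End OuterEdge.

Section InnerEdge.
Variables x y : 'I_n.
Hypotheses (x_in : x \in comp :\: [set s; t]) (y_in : y \in comp :\: [set s; t]).
Hypothesis neq_xy : x != y.

Local Notation g := [set x; y].
Local Notation sx := [set s; x].
Local Notation sy := [set s; y].
Local Notation yt := [set y; t].

Lemma inner_in_E : g \in E.
Proof. by case/setDP: x_in; case/setDP: y_in => *; apply: comp_complete. Qed.

Lemma inner_terminals : s \notin g /\ t \notin g.
Proof.
have notin_g a : a \in [set s; t] -> a \notin g.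
  move=> a_st; rewrite in_set2 negb_or.
  by apply/andP; split; apply: contraTneq a_st => ->; [case/setDP: x_in | case/setDP: y_in].
by split; apply: notin_g; rewrite ?set21 ?set22.
Qed.

(* A short s-t walk through [xy] is [s x y t] or [s y x t]; [yt \in F] tells which,
   and [pendant_swap] below leaves [yt] in place. *)
Lemma critical_inner F j : F \in critical short_path (E :\ g) g j ->
  [/\ F \subset E :\ g, #|F| = j, ~~ walk3 F s t,
      (sx \in F) || (sy \in F) & (yt \in F) = (sx \in F)].
Proof.
have [s_g t_g] := inner_terminals.
case/(critical_bridge inner_in_E s_g t_g)=> sFC cardF nW [a [b [/set2_eq[[<- <-]|[<- <-]] sa bt]]].
  by rewrite sa bt.
split=> //; first by rewrite sa orbT.
by rewrite (contraNF (fun sx_F => walk3_2 sx_F bt) nW) (contraNF (walk3_2 sa) nW).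
Qed.

Definition pendant_swap F := tperm sv (if sx \in F then sx else sy) @: F.

Lemma pendant_swap_critical F j : F \in critical short_path (E :\ g) g j ->
  pendant_swap F \in critical short_path (E :\ g) vt j.
Proof.
case/critical_inner=> sFC cardF nW pick _.
have [s_g _] := inner_terminals.
set z := if sx \in F then sx else sy.
have zF : z \in F by rewrite /z; case: ifP pick => // _ /= ->.
have sv_in : sv \in E :\ g by rewrite in_setD1 sv_in_E eq_sym (set2_neq _ s_g).
have [sFE _] := subsetD1P sFC.
have swap_sub : pendant_swap F \subset E :\ g by apply: tperm_imset_sub => //; apply: (subsetP sFC).
have sv_swap : sv \in pendant_swap F by rewrite -{1}(tpermR sv z) imset_f.
have [swap_E _] := subsetD1P swap_sub.
rewrite inE powersetE swap_sub card_imset ?cardF ?eqxx /=; last exact: perm_inj.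
rewrite (short_pathE (setUS _ swap_E)).
apply/andP; split; last exact: walk3_2 (setU1r _ sv_swap) (setU11 _ _).
apply: contra nW => /(short_path_subset (tperm_imset_subU1 _ zF)).
by rewrite short_pathE ?subset_vtE ?subUset ?sub1set ?sv_in_E //; apply: walk3_pendant.
Qed.

Lemma pendant_swap_inj j : {in critical short_path (E :\ g) g j &, injective pendant_swap}.
Proof.
move=> F1 F2 /critical_inner[_ _ _ _ yt1] /critical_inner[_ _ _ _ yt2] eq_swap.
have s_yt : s \notin yt.
  have [s_g _] := inner_terminals.
  by rewrite in_set2 negb_or neq_st andbT; apply: contra s_g => /eqP->; apply: set22.
have neq_yt (z : {set 'I_n}) : s \in z -> z != yt by move=> sz; apply: contraTneq sz => ->.
have mem_yt F : (yt \in pendant_swap F) = (yt \in F).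
  have s_z : s \in (if sx \in F then sx else sy) by case: ifP; rewrite set21.
  rewrite /pendant_swap -{1}(tpermD (neq_yt sv (set21 _ _)) (neq_yt _ s_z)).
  by rewrite mem_imset //; apply: perm_inj.
have same_pick : (sx \in F1) = (sx \in F2).
  by rewrite -yt1 -yt2 -(mem_yt F1) -(mem_yt F2) eq_swap.
by move: eq_swap; rewrite /pendant_swap same_pick; apply: imset_inj; apply: perm_inj.
Qed.

Lemma critical_inner_le j :
  #|critical short_path (E :\ g) g j| <= #|critical short_path (E :\ g) vt j|.
Proof.
rewrite -(card_in_imset (@pendant_swap_inj j)); apply/subset_leq_card/subsetP.
by move=> _ /imsetP[F F_crit ->]; apply: pendant_swap_critical F_crit.
Qed.

Lemma inner_edge_stronger :
  is_tgraph m (vt |: E :\ g) s t /\ stronger m 3 (vt |: E :\ g) s t E s t.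
Proof.
have [s_g t_g] := inner_terminals.
exact: replace_edge_stronger inner_in_E s_g t_g critical_inner_le.
Qed.

End InnerEdge.

Lemma card_compD_gt1 : 3 < #|comp| -> 1 < #|comp :\: [set s; t]|.
Proof.
have st_comp : [set s; t] \subset comp by rewrite subUset !sub1set s_comp t_comp.
by rewrite cardsD (setIidPr st_comp) cards2 neq_st ltn_subRL.
Qed.

Lemma exists_outer_edge : #|comp| <= 3 -> exists2 e, e \in E' & ~~ (e \subset comp).
Proof.
move=> small.
have : ~~ (E' \subset [set e : {set 'I_n} | e \subset comp & #|e| == 2]).
  apply/negP=> /subset_leq_card; rewrite cards_draws => /leq_trans/(_ (leq_bin2l 2 small)).
  move: card_E m_gt4; rewrite (cardsD1 sv) sv_in_E add1n => <-; rewrite ltnS => ge4 le3.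
  by have := leq_trans ge4 le3.
case/subsetPn=> e e_in e_bad; exists e => //; apply: contra e_bad => e_sub.
by have /setD1P[_ /edge_card2 card_e] := e_in; rewrite inE e_sub card_e.
Qed.

End PendantVertex.

Theorem lemma7 (n m : nat) (E : {set {set 'I_n}}) (s t v : 'I_n) :
  5 <= n -> 5 <= m ->
  is_tgraph m E s t ->
  deg E v = 1 -> [set s; v] \in E ->
  complete_tgraph (E :\ [set s; v]) s t ->
  exists (EH : {set {set 'I_n}}) (sH tH : 'I_n),
    is_tgraph m EH sH tH /\ stronger m 3 EH sH tH E s t.
Proof.
move=> _ m_gt4 E_tgraph deg_v sv_in_E rest_complete.
have [big|small] := ltnP 3 #|comp E s v|.
- have /card_gt1P[x [y [x_in y_in neq_xy]]] := card_compD_gt1 E_tgraph rest_complete big.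
  exists ([set v; t] |: E :\ [set x; y]), s, t.
  exact: inner_edge_stronger.
- have [e e_in e_outside] := exists_outer_edge m_gt4 E_tgraph sv_in_E small.
  exists ([set v; t] |: E :\ e), s, t.
  exact: outer_edge_stronger.
Qed.
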